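(* Let $A$ be a $2\times2$ integer matrix with determinant $1$ and no eigenvalue of modulus $1$, $f_A\colon\mathbb{T}^2\to\mathbb{T}^2$ the induced Anosov diffeomorphism, and $g_A\colon\mathbb{S}^2\to\mathbb{S}^2$ the homeomorphism induced by $f_A$ on the quotient $\mathbb{S}^2=\mathbb{T}^2/(x\sim -x)$. Then $g_A$ has the two-sided limit shadowing property.
   Context: A homeomorphism $f$ of a compact metric space has the two-sided limit shadowing property if for every sequence $(x_k)_{k\in\mathbb{Z}}$ with $d(f(x_k),x_{k+1})\to0$ as $|k|\to\infty$ there is $y$ with $d(f^k(y),x_k)\to0$ as $|k|\to\infty$. *)

From Stdlib Require Import Reals ZArith.
Open Scope R_scope.

Definition iterZ {X : Type} (f finv : X -> X) (k : Z) (x : X) : X :=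
  match k with
  | Z0 => x
  | Zpos p => Nat.iter (Pos.to_nat p) f x
  | Zneg p => Nat.iter (Pos.to_nat p) finv x
  end.

Definition tends_to_zero_two_sided (u : Z -> R) : Prop :=
  forall eps : R, eps > 0 ->
    exists N : Z, forall k : Z, (Z.abs k >= N)%Z -> Rabs (u k) < eps.

Definition two_sided_limit_shadowing {X : Type} (d : X -> X -> R)
    (f finv : X -> X) : Prop :=
  forall x : Z -> X,
    tends_to_zero_two_sided (fun k => d (f (x k)) (x (k + 1)%Z)) ->
    exists y : X,
      tends_to_zero_two_sided (fun k => d (iterZ f finv k y) (x k)).

(** * The torus T^2 = R^2/Z^2 and the sphere S^2 = T^2/(x ~ -x),
    points represented by their lifts in R^2. *)

Definition pt := (R * R)%type.

Definition circ_norm (t : R) : R := Rmin (frac_part t) (1 - frac_part t).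

Definition dT (x y : pt) : R :=
  Rmax (circ_norm (fst x - fst y)) (circ_norm (snd x - snd y)).

Definition neg_pt (y : pt) : pt := (- fst y, - snd y).

Definition dS (x y : pt) : R := Rmin (dT x y) (dT x (neg_pt y)).

(** The integer matrix A = [[a, b], [c, d]] acting linearly on lifts;
    this descends to f_A on T^2 and to g_A on S^2. *)
Definition lin (a b c d : Z) (x : pt) : pt :=
  (IZR a * fst x + IZR b * snd x, IZR c * fst x + IZR d * snd x).

(* A has an eigenvalue lambda = u + i v with |lambda| = 1, i.e.
   det (A - lambda I) = (a - lambda)(d - lambda) - b c = 0 written out in
   real and imaginary parts. *)
Definition has_unimodular_eigenvalue (a b c d : Z) : Prop :=
  exists u v : R, u ^ 2 + v ^ 2 = 1 /\
    (IZR a - u) * (IZR d - u) - v ^ 2 - IZR b * IZR c = 0 /\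
    v * ((IZR a - u) + (IZR d - u)) = 0.

(* g_A on S^2 (via lifts) and its inverse g_{A^{-1}}, A^{-1} = [[d,-b],[-c,a]]
   since det A = 1. *)
Definition gA (a b c d : Z) : pt -> pt := lin a b c d.
Definition gA_inv (a b c d : Z) : pt -> pt := lin d (- b) (- c) a.

From Stdlib Require Import Reals ZArith Lra Lia.
Open Scope R_scope.

(* Lift the asymptotic pseudo-orbit x from S^2 to R^2: going forward, z_(k+1) is
   the lift of x_(k+1) nearest to A z_k; going backward, z_(k-1) is chosen so that
   A z_(k-1) is the lift of A x_(k-1) nearest to z_k.  Then |A z_k - z_(k+1)| is at
   most dS (g_A x_k) x_(k+1), which tends to 0.  Since |tr A| > 2, A has real
   eigenvalues off the unit circle, and in left-eigenvector coordinates the lift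
   splits into two scalar sequences with p_(k+1) - rho p_k -> 0.  For |rho| > 1 such
   a p is shadowed by k |-> C rho^k with C = lim p_n rho^(-n) (the increments of
   p_n rho^(-n) decay geometrically), while as k -> -oo both tend to 0 because
   multiplication by rho contracts backwards; |rho| < 1 follows by reversing time.
   The point of R^2 with these two eigen-coordinates has an A-orbit asymptotic to the
   lift at both ends, so its projection shadows x on S^2. *)

(** * Distances on the torus and the sphere *)

Definition nearest_int (t : R) : Z :=
  if Rle_dec (frac_part t) (1 - frac_part t) then Int_part t else (Int_part t + 1)%Z.

Lemma frac_part_bounds t : 0 <= frac_part t < 1.
Proof. unfold frac_part. destruct (base_Int_part t). lra. Qed.

Lemma circ_norm_nearest_int t : circ_norm t = Rabs (t - IZR (nearest_int t)).
Proof.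
  unfold circ_norm, nearest_int, Rmin. pose proof (frac_part_bounds t).
  unfold frac_part in *. destruct (Rle_dec _ _).
  - rewrite Rabs_right; lra.
  - rewrite plus_IZR, Rabs_left1; lra.
Qed.

Lemma circ_norm_le_dist_int t (m : Z) : circ_norm t <= Rabs (t - IZR m).
Proof.
  unfold circ_norm. pose proof (frac_part_bounds t). unfold frac_part in *.
  destruct (Z_le_gt_dec m (Int_part t)) as [Hm | Hm].
  - apply IZR_le in Hm. eapply Rle_trans; [apply Rmin_l |]. rewrite Rabs_right; lra.
  - assert (Hm' : IZR (Int_part t + 1) <= IZR m) by (apply IZR_le; lia).
    rewrite plus_IZR in Hm'.
    eapply Rle_trans; [apply Rmin_r |]. rewrite Rabs_left1; lra.
Qed.

Lemma circ_norm_nonneg t : 0 <= circ_norm t.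
Proof. rewrite circ_norm_nearest_int. apply Rabs_pos. Qed.

Lemma circ_norm_le_abs t : circ_norm t <= Rabs t.
Proof. rewrite <- (Rminus_0_r t) at 2. apply (circ_norm_le_dist_int t 0). Qed.

Lemma circ_norm_add_int t (n : Z) : circ_norm (t + IZR n) = circ_norm t.
Proof.
  apply Rle_antisym.
  - rewrite (circ_norm_nearest_int t).
    replace (t - IZR (nearest_int t)) with (t + IZR n - IZR (nearest_int t + n))
      by (rewrite plus_IZR; ring).
    apply circ_norm_le_dist_int.
  - rewrite (circ_norm_nearest_int (t + IZR n)).
    replace (t + IZR n - IZR (nearest_int (t + IZR n)))
      with (t - IZR (nearest_int (t + IZR n) - n)) by (rewrite minus_IZR; ring).
    apply circ_norm_le_dist_int.
Qed.

Lemma circ_norm_opp t : circ_norm (- t) = circ_norm t.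
Proof.
  assert (Hle : forall s, circ_norm (- s) <= circ_norm s).
  { intro s. rewrite (circ_norm_nearest_int s), <- Rabs_Ropp.
    replace (- (s - IZR (nearest_int s))) with (- s - IZR (- nearest_int s))
      by (rewrite opp_IZR; ring).
    apply circ_norm_le_dist_int. }
  apply Rle_antisym; [apply Hle |].
  rewrite <- (Ropp_involutive t) at 1. apply Hle.
Qed.

Definition translate (q : pt) (n1 n2 : Z) : pt := (fst q + IZR n1, snd q + IZR n2).

Definition sphere_equiv (p q : pt) : Prop :=
  exists n1 n2 : Z, p = translate q n1 n2 \/ p = translate (neg_pt q) n1 n2.

Definition sup_dist (p q : pt) : R := Rmax (Rabs (fst p - fst q)) (Rabs (snd p - snd q)).

Lemma dT_sym u v : dT u v = dT v u.
Proof.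
  unfold dT. rewrite <- (circ_norm_opp (fst u - fst v)), <- (circ_norm_opp (snd u - snd v)).
  f_equal; f_equal; ring.
Qed.

Lemma dT_neg_sym u v : dT u (neg_pt v) = dT v (neg_pt u).
Proof. unfold dT, neg_pt; simpl. f_equal; f_equal; ring. Qed.

Lemma dS_sym u v : dS u v = dS v u.
Proof. unfold dS. rewrite dT_sym, dT_neg_sym. reflexivity. Qed.

Lemma dT_translate_r u v n1 n2 : dT u (translate v n1 n2) = dT u v.
Proof.
  unfold dT, translate; simpl.
  rewrite <- (circ_norm_add_int (fst u - fst v) (- n1)),
          <- (circ_norm_add_int (snd u - snd v) (- n2)), !opp_IZR.
  f_equal; f_equal; ring.
Qed.

Lemma neg_pt_translate v n1 n2 :
  neg_pt (translate v n1 n2) = translate (neg_pt v) (- n1) (- n2).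
Proof. unfold neg_pt, translate; simpl. rewrite !opp_IZR. f_equal; ring. Qed.

Lemma neg_pt_involutive v : neg_pt (neg_pt v) = v.
Proof. destruct v. unfold neg_pt; simpl. rewrite !Ropp_involutive. reflexivity. Qed.

Lemma dS_translate_r u v n1 n2 : dS u (translate v n1 n2) = dS u v.
Proof. unfold dS. rewrite neg_pt_translate, !dT_translate_r. reflexivity. Qed.

Lemma dS_neg_r u v : dS u (neg_pt v) = dS u v.
Proof. unfold dS. rewrite neg_pt_involutive. apply Rmin_comm. Qed.

Lemma dS_sphere_equiv_r u p q : sphere_equiv p q -> dS u p = dS u q.
Proof.
  intros (n1 & n2 & [-> | ->]); rewrite dS_translate_r; [reflexivity | apply dS_neg_r].
Qed.

Lemma dS_sphere_equiv_l u p q : sphere_equiv p q -> dS p u = dS q u.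
Proof. intro Hpq. rewrite dS_sym, (dS_sym q). apply dS_sphere_equiv_r, Hpq. Qed.

Lemma sphere_equiv_lin a b c d p q :
  sphere_equiv p q -> sphere_equiv (lin a b c d p) (lin a b c d q).
Proof.
  intros (n1 & n2 & Hp). exists (a * n1 + b * n2)%Z, (c * n1 + d * n2)%Z.
  destruct Hp as [-> | ->]; [left | right];
    unfold lin, translate, neg_pt; simpl; rewrite !plus_IZR, !mult_IZR; f_equal; ring.
Qed.

Definition nearest_translate (p q : pt) : pt :=
  translate q (nearest_int (fst p - fst q)) (nearest_int (snd p - snd q)).

Definition nearest_lift (p q : pt) : pt :=
  if Rle_dec (dT p q) (dT p (neg_pt q)) then nearest_translate p q
  else nearest_translate p (neg_pt q).

Lemma nearest_lift_equiv p q : sphere_equiv (nearest_lift p q) q.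
Proof.
  unfold nearest_lift, nearest_translate.
  destruct (Rle_dec _ _); do 2 eexists; [left | right]; reflexivity.
Qed.

Lemma sup_dist_nearest_translate p q : sup_dist p (nearest_translate p q) = dT p q.
Proof.
  unfold sup_dist, nearest_translate, translate, dT; simpl.
  rewrite !circ_norm_nearest_int. f_equal; f_equal; ring.
Qed.

Lemma sup_dist_nearest_lift p q : sup_dist p (nearest_lift p q) = dS p q.
Proof.
  unfold nearest_lift, dS, Rmin. destruct (Rle_dec _ _); apply sup_dist_nearest_translate.
Qed.

Lemma sup_dist_sym p q : sup_dist p q = sup_dist q p.
Proof. unfold sup_dist. rewrite (Rabs_minus_sym (fst p)), (Rabs_minus_sym (snd p)). reflexivity. Qed.

Lemma dS_le_sup_dist p q : dS p q <= sup_dist p q.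
Proof.
  unfold dS, dT, sup_dist. eapply Rle_trans; [apply Rmin_l |].
  apply Rmax_lub; [eapply Rle_trans; [apply circ_norm_le_abs | apply Rmax_l]
                 |eapply Rle_trans; [apply circ_norm_le_abs | apply Rmax_r]].
Qed.

Lemma dS_nonneg p q : 0 <= dS p q.
Proof.
  unfold dS, dT. apply Rmin_glb; (eapply Rle_trans; [apply circ_norm_nonneg | apply Rmax_l]).
Qed.

(** * Sequences tending to zero *)

Local Notation tz := tends_to_zero_two_sided.

Lemma tz_le (u v : Z -> R) : tz v -> (forall k, Rabs (u k) <= v k) -> tz u.
Proof.
  intros Hv Huv eps Heps. destruct (Hv eps Heps) as [N HN]. exists N. intros k Hk.
  eapply Rle_lt_trans; [apply Huv |]. eapply Rle_lt_trans; [apply Rle_abs | apply HN, Hk].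
Qed.

Lemma tz_abs (u : Z -> R) : tz u -> tz (fun k => Rabs (u k)).
Proof.
  intros Hu eps Heps. destruct (Hu eps Heps) as [N HN]. exists N. intros k Hk.
  rewrite Rabs_Rabsolu. apply HN, Hk.
Qed.

Lemma tz_ext (u v : Z -> R) : tz u -> (forall k, v k = u k) -> tz v.
Proof.
  intros Hu Huv. apply (tz_le v (fun k => Rabs (u k))); [apply tz_abs, Hu |].
  intro k. rewrite Huv. apply Rle_refl.
Qed.

Lemma tz_plus (u v : Z -> R) : tz u -> tz v -> tz (fun k => u k + v k).
Proof.
  intros Hu Hv eps Heps.
  destruct (Hu (eps / 2)) as [N1 HN1]; [lra |]. destruct (Hv (eps / 2)) as [N2 HN2]; [lra |].
  exists (Z.max N1 N2). intros k Hk.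
  specialize (HN1 k ltac:(lia)). specialize (HN2 k ltac:(lia)).
  eapply Rle_lt_trans; [apply Rabs_triang | lra].
Qed.

Lemma tz_scal (K : R) (u : Z -> R) : tz u -> tz (fun k => K * u k).
Proof.
  intros Hu eps Heps. pose proof (Rabs_pos K).
  destruct (Hu (eps / (Rabs K + 1))) as [N HN]; [apply Rdiv_lt_0_compat; lra |].
  exists N. intros k Hk. specialize (HN k Hk). rewrite Rabs_mult.
  apply (Rmult_lt_compat_l (Rabs K + 1)) in HN; [| lra].
  replace ((Rabs K + 1) * (eps / (Rabs K + 1))) with eps in HN by (field; lra).
  pose proof (Rabs_pos (u k)). nra.
Qed.

Lemma tz_reflect (u : Z -> R) (m : Z) : tz u -> tz (fun k => u (m - k)%Z).
Proof.
  intros Hu eps Heps. destruct (Hu eps Heps) as [N HN].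
  exists (N + Z.abs m)%Z. intros k Hk. apply HN. lia.
Qed.

Lemma tz_split (u : Z -> R) :
  tz u <-> Un_cv (fun n => u (Z.of_nat n)) 0 /\ Un_cv (fun n => u (- Z.of_nat n)%Z) 0.
Proof.
  unfold Un_cv, Rdist. split.
  - intros Hu. split; intros eps Heps; destruct (Hu eps Heps) as [N HN];
      exists (Z.to_nat N); intros n Hn; rewrite Rminus_0_r; apply HN; lia.
  - intros [Hpos Hneg] eps Heps.
    destruct (Hpos eps Heps) as [N1 HN1]. destruct (Hneg eps Heps) as [N2 HN2].
    exists (Z.of_nat (Nat.max N1 N2)). intros k Hk.
    destruct (Z_le_gt_dec 0 k).
    + specialize (HN1 (Z.to_nat k) ltac:(lia)). rewrite Z2Nat.id, Rminus_0_r in HN1 by lia.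
      exact HN1.
    + specialize (HN2 (Z.to_nat (- k)) ltac:(lia)).
      rewrite Z2Nat.id, Z.opp_involutive, Rminus_0_r in HN2 by lia. exact HN2.
Qed.

Lemma contraction_cv_0 (u e : nat -> R) (s : R) : 0 <= s < 1 ->
  (forall n, Rabs (u (S n)) <= s * Rabs (u n) + e n) -> Un_cv e 0 -> Un_cv u 0.
Proof.
  unfold Un_cv, Rdist. intros Hs Hu He eps Heps.
  destruct (He (eps * (1 - s) / 2)) as [M HM]; [apply Rdiv_lt_0_compat; nra |].
  assert (Hdecay : forall j, Rabs (u (M + j)%nat) <= s ^ j * Rabs (u M) + eps / 2).
  { induction j as [| j IH].
    - rewrite Nat.add_0_r. simpl. lra.
    - rewrite Nat.add_succ_r. eapply Rle_trans; [apply Hu |].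
      specialize (HM (M + j)%nat ltac:(lia)). rewrite Rminus_0_r in HM.
      pose proof (Rle_abs (e (M + j)%nat)). simpl. nra. }
  destruct (pow_lt_1_zero s ltac:(rewrite Rabs_pos_eq; lra) (eps / 2 / (Rabs (u M) + 1)))
    as [J HJ].
  { pose proof (Rabs_pos (u M)). apply Rdiv_lt_0_compat; lra. }
  exists (M + J)%nat. intros n Hn. rewrite Rminus_0_r.
  replace n with (M + (n - M))%nat by lia.
  specialize (HJ (n - M)%nat ltac:(lia)). rewrite Rabs_pos_eq in HJ by (apply pow_le; lra).
  pose proof (Rabs_pos (u M)). pose proof (pow_le s (n - M) ltac:(lra)).
  assert (s ^ (n - M) * Rabs (u M) < eps / 2).
  { apply Rle_lt_trans with (s ^ (n - M) * (Rabs (u M) + 1)); [nra |].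
    apply (Rmult_lt_compat_r (Rabs (u M) + 1)) in HJ; [| lra].
    replace (eps / 2 / (Rabs (u M) + 1) * (Rabs (u M) + 1)) with (eps / 2) in HJ
      by (field; lra). exact HJ. }
  specialize (Hdecay (n - M)%nat). lra.
Qed.

Lemma geometric_increments_tail (a : nat -> R) (s eta : R) (M : nat) : 0 <= s < 1 ->
  (forall n, (M <= n)%nat -> Rabs (a (S n) - a n) <= eta * s ^ n) ->
  forall n i, (M <= n)%nat -> Rabs (a (n + i)%nat - a n) <= eta * s ^ n * (1 - s ^ i) / (1 - s).
Proof.
  intros Hs Ha n i Hn. induction i as [| i IH].
  - rewrite Nat.add_0_r, Rminus_diag, Rabs_R0. simpl. right. field. lra.
  - replace (a (n + S i)%nat - a n)
      with ((a (S (n + i)) - a (n + i)%nat) + (a (n + i)%nat - a n))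
      by (rewrite Nat.add_succ_r; ring).
    eapply Rle_trans; [apply Rabs_triang |].
    eapply Rle_trans; [apply Rplus_le_compat; [apply Ha; lia | apply IH] |].
    right. rewrite pow_add. simpl. field. lra.
Qed.

Lemma geometric_increments_limit (a : nat -> R) (s : R) : 0 <= s < 1 ->
  (forall eta, 0 < eta ->
     exists M, forall n, (M <= n)%nat -> Rabs (a (S n) - a n) <= eta * s ^ n) ->
  exists C, forall eta, 0 < eta ->
     exists M, forall n, (M <= n)%nat -> Rabs (C - a n) <= eta * s ^ n.
Proof.
  intros Hs Ha.
  assert (Htail : forall eta, 0 < eta -> exists M, forall n i, (M <= n)%nat ->
            Rabs (a (n + i)%nat - a n) <= eta * s ^ n).
  { intros eta Heta. destruct (Ha (eta * (1 - s))) as [M HM]; [nra |].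
    exists M. intros n i Hn.
    eapply Rle_trans; [apply (geometric_increments_tail a s _ M Hs HM n i Hn) |].
    pose proof (pow_le s n ltac:(lra)). pose proof (pow_le s i ltac:(lra)).
    replace (eta * (1 - s) * s ^ n * (1 - s ^ i) / (1 - s))
      with (eta * s ^ n - eta * s ^ n * s ^ i) by (field; lra).
    assert (0 <= eta * s ^ n * s ^ i) by (apply Rmult_le_pos; [nra | lra]). lra. }
  assert (Hcauchy : Cauchy_crit a).
  { intros eps Heps. destruct (Htail (eps / 3)) as [M HM]; [lra |].
    exists M. intros n m Hn Hm. unfold Rdist.
    pose proof (HM M (n - M)%nat (Nat.le_refl M)) as Hn'.
    pose proof (HM M (m - M)%nat (Nat.le_refl M)) as Hm'.
    replace (M + (n - M))%nat with n in Hn' by lia.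
    replace (M + (m - M))%nat with m in Hm' by lia.
    replace (a n - a m) with ((a n - a M) - (a m - a M)) by ring.
    eapply Rle_lt_trans; [apply Rabs_triang |]. rewrite Rabs_Ropp.
    assert (s ^ M <= 1) by (rewrite <- (pow1 M); apply pow_incr; lra). nra. }
  destruct (R_complete a Hcauchy) as [C HC]. exists C.
  intros eta Heta. destruct (Htail eta Heta) as [M HM]. exists M. intros n Hn.
  apply le_epsilon. intros e He. destruct (HC e He) as [N HN].
  specialize (HN (n + N)%nat ltac:(lia)). unfold Rdist in HN.
  specialize (HM n N Hn).
  replace (C - a n) with (- (a (n + N)%nat - C) + (a (n + N)%nat - a n)) by ring.
  eapply Rle_trans; [apply Rabs_triang |]. rewrite Rabs_Ropp. lra.
Qed.

(** * Shadowing for multiplication by a scalar *)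

Definition geometric (rho : R) (q : Z -> R) : Prop := forall k, q (k + 1)%Z = rho * q k.

Lemma geometric_unique (rho : R) (q1 q2 : Z -> R) : rho <> 0 ->
  geometric rho q1 -> geometric rho q2 -> q1 0%Z = q2 0%Z -> forall k, q1 k = q2 k.
Proof.
  intros Hrho H1 H2 H0. apply Z.peano_ind; [exact H0 | |].
  - intros k Hk. rewrite <- Z.add_1_r, H1, H2, Hk. reflexivity.
  - intros k Hk. apply (Rmult_eq_reg_l rho); [| exact Hrho].
    rewrite <- H1, <- H2. replace (Z.pred k + 1)%Z with k by lia. exact Hk.
Qed.

Section Expanding.
Variable rho : R.
Hypothesis rho_gt_1 : 1 < Rabs rho.

Lemma expanding_neq_0 : rho <> 0.
Proof. intro E. rewrite E, Rabs_R0 in rho_gt_1. lra. Qed.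

Lemma expanding_inv_bounds : 0 < / Rabs rho < 1.
Proof.
  split; [apply Rinv_0_lt_compat; lra |].
  rewrite <- Rinv_1. apply Rinv_lt_contravar; lra.
Qed.

Lemma expanding_backward_cv_0 (p : Z -> R) :
  tz (fun k => p (k + 1)%Z - rho * p k) -> Un_cv (fun n => p (- Z.of_nat n)%Z) 0.
Proof.
  intros Hp. pose proof expanding_inv_bounds as Hs. set (s := / Rabs rho) in Hs |- *.
  apply contraction_cv_0 with (s := s)
    (e := fun n => s * Rabs (p (- Z.of_nat n)%Z - rho * p (- Z.of_nat (S n))%Z)); [lra | |].
  - intro n.
    replace (Rabs (p (- Z.of_nat (S n))%Z)) with (s * Rabs (rho * p (- Z.of_nat (S n))%Z))
      by (rewrite Rabs_mult; unfold s; field; lra).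
    rewrite <- Rmult_plus_distr_l. apply Rmult_le_compat_l; [lra |].
    replace (rho * p (- Z.of_nat (S n))%Z) with
      (p (- Z.of_nat n)%Z - (p (- Z.of_nat n)%Z - rho * p (- Z.of_nat (S n))%Z)) at 1 by ring.
    eapply Rle_trans; [apply Rabs_triang | rewrite Rabs_Ropp; apply Rle_refl].
  - intros eps Heps. destruct (Hp eps Heps) as [N HN]. exists (Z.to_nat N). intros n Hn.
    unfold Rdist. rewrite Rminus_0_r.
    specialize (HN (- Z.of_nat (S n))%Z ltac:(lia)).
    replace (- Z.of_nat (S n) + 1)%Z with (- Z.of_nat n)%Z in HN by lia.
    rewrite Rabs_mult, Rabs_Rabsolu, Rabs_pos_eq by lra.
    pose proof (Rabs_pos (p (- Z.of_nat n)%Z - rho * p (- Z.of_nat (S n))%Z)). nra.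
Qed.

Lemma expanding_forward_shadowing (p : Z -> R) :
  tz (fun k => p (k + 1)%Z - rho * p k) ->
  exists C, Un_cv (fun n => C * rho ^ n - p (Z.of_nat n)) 0.
Proof.
  intros Hp. pose proof expanding_inv_bounds as Hs. pose proof expanding_neq_0 as Hrho.
  set (s := / Rabs rho) in Hs.
  assert (Hinv_pow : forall n, Rabs (/ rho ^ n) = s ^ n).
  { intro n. unfold s. rewrite Rabs_inv, <- RPow_abs, pow_inv. reflexivity. }
  destruct (geometric_increments_limit (fun n => p (Z.of_nat n) / rho ^ n) s)
    as [C HC]; [lra | |].
  - intros eta Heta. destruct (Hp eta Heta) as [N HN]. exists (Z.to_nat N). intros n Hn.
    specialize (HN (Z.of_nat n) ltac:(lia)).
    replace (p (Z.of_nat (S n)) / rho ^ S n - p (Z.of_nat n) / rho ^ n)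
      with ((p (Z.of_nat n + 1)%Z - rho * p (Z.of_nat n)) * / rho ^ S n)
      by (rewrite Nat2Z.inj_succ, <- Z.add_1_r; simpl; field; split;
          [apply pow_nonzero |]; exact Hrho).
    rewrite Rabs_mult, Hinv_pow. simpl.
    pose proof (pow_le s n ltac:(lra)).
    apply Rle_trans with (Rabs (p (Z.of_nat n + 1)%Z - rho * p (Z.of_nat n)) * s ^ n).
    + apply Rmult_le_compat_l; [apply Rabs_pos | nra].
    + apply Rmult_le_compat_r; lra.
  - exists C. intros eps Heps. destruct (HC (eps / 2)) as [M HM]; [lra |].
    exists M. intros n Hn. specialize (HM n Hn). unfold Rdist. rewrite Rminus_0_r.
    replace (C * rho ^ n - p (Z.of_nat n)) with (rho ^ n * (C - p (Z.of_nat n) / rho ^ n))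
      by (field; apply pow_nonzero; exact Hrho).
    rewrite Rabs_mult, <- RPow_abs.
    assert (Hprod : Rabs rho ^ n * s ^ n = 1).
    { rewrite <- Rpow_mult_distr. unfold s. rewrite Rinv_r by lra. apply pow1. }
    pose proof (pow_lt (Rabs rho) n ltac:(lra)). nra.
Qed.

Lemma expanding_shadowing (p : Z -> R) : tz (fun k => p (k + 1)%Z - rho * p k) ->
  exists q, geometric rho q /\ tz (fun k => q k - p k).
Proof.
  intros Hp. pose proof expanding_neq_0 as Hrho.
  destruct (expanding_forward_shadowing p Hp) as [C HC].
  set (q := fun k => C * powerRZ rho k).
  assert (Hq : geometric rho q).
  { intro k. unfold q. rewrite powerRZ_add by exact Hrho. simpl. ring. }
  exists q. split; [exact Hq |]. apply tz_split. split.
  - intros eps Heps. destruct (HC eps Heps) as [N HN]. exists N. intros n Hn.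
    unfold q. rewrite <- pow_powerRZ. apply HN, Hn.
  - rewrite <- (Rminus_0_r 0). apply CV_minus; apply expanding_backward_cv_0; [| exact Hp].
    intros eps Heps. exists 0%Z. intros k _. rewrite Hq, Rminus_diag, Rabs_R0. exact Heps.
Qed.

End Expanding.

Lemma scalar_shadowing (rho : R) (p : Z -> R) : rho <> 0 -> Rabs rho <> 1 ->
  tz (fun k => p (k + 1)%Z - rho * p k) ->
  exists q, geometric rho q /\ tz (fun k => q k - p k).
Proof.
  intros Hrho Hrho1 Hp. destruct (Rlt_le_dec 1 (Rabs rho)) as [Hgt | Hle].
  - exact (expanding_shadowing rho Hgt p Hp).
  - (* reversing time turns multiplication by [rho] into multiplication by [/ rho] *)
    assert (Hinv : 1 < Rabs (/ rho)).
    { rewrite Rabs_inv, <- Rinv_1. apply Rinv_lt_contravar; [| lra].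
      rewrite Rmult_1_r. apply Rabs_pos_lt, Hrho. }
    destruct (expanding_shadowing (/ rho) Hinv (fun k => p (- k)%Z)) as (q & Hq & Hqp).
    + apply tz_ext with (fun k => - / rho * (p (-1 - k + 1)%Z - rho * p (-1 - k)%Z)).
      * apply tz_scal, (tz_reflect (fun k => p (k + 1)%Z - rho * p k)), Hp.
      * intro k. replace (-1 - k + 1)%Z with (- k)%Z by lia.
        replace (- (k + 1))%Z with (-1 - k)%Z by lia. field. exact Hrho.
    + exists (fun k => q (- k)%Z). split.
      * intro k. specialize (Hq (- (k + 1))%Z).
        replace (- (k + 1) + 1)%Z with (- k)%Z in Hq by lia. rewrite Hq. field. exact Hrho.
      * apply tz_ext with (fun k => q (0 - k)%Z - p (- (0 - k))%Z);
          [apply (tz_reflect (fun k => q k - p (- k)%Z)), Hqp |].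
        intro k. replace (- (0 - k))%Z with k by lia. reflexivity.
Qed.

(** * The hyperbolic matrix *)

Lemma Z_of_nat_cases (k : Z) :
  (exists n : nat, k = Z.of_nat n) \/ (exists n : nat, k = (- Z.of_nat (S n))%Z).
Proof.
  destruct (Z_le_gt_dec 0 k).
  - left. exists (Z.to_nat k). lia.
  - right. exists (Z.to_nat (- k - 1)). lia.
Qed.

Lemma iterZ_succ {X : Type} (f finv : X -> X) : (forall y, f (finv y) = y) ->
  forall k y, iterZ f finv (k + 1) y = f (iterZ f finv k y).
Proof.
  intros Hf [| p | p] y; [reflexivity | |].
  - unfold iterZ. simpl. rewrite Pos.add_1_r, Pos2Nat.inj_succ. reflexivity.
  - destruct (Pos.succ_pred_or p) as [-> | <-]; [symmetry; apply Hf |].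
    replace (Zneg (Pos.succ (Pos.pred p)) + 1)%Z with (Zneg (Pos.pred p)) by lia.
    unfold iterZ. rewrite Pos2Nat.inj_succ. simpl. symmetry. apply Hf.
Qed.

Lemma quadratic_distinct_roots (t : R) : 4 < t * t ->
  exists lam mu, lam <> mu /\ lam ^ 2 - t * lam + 1 = 0 /\ mu ^ 2 - t * mu + 1 = 0.
Proof.
  intros Ht. set (r := sqrt (t * t - 4)).
  assert (Hr : r * r = t * t - 4) by (apply sqrt_sqrt; lra).
  assert (Hr0 : 0 < r) by (apply sqrt_lt_R0; lra).
  exists ((t + r) / 2), ((t - r) / 2). repeat split; [lra | nra | nra].
Qed.

Lemma quadratic_root_hyperbolic (t rho : R) : 4 < t * t -> rho ^ 2 - t * rho + 1 = 0 ->
  rho <> 0 /\ Rabs rho <> 1.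
Proof.
  intros Ht Hrho. split.
  - intros ->. simpl in Hrho. lra.
  - intro E. assert (Hsq : rho ^ 2 = 1) by (rewrite <- pow2_abs, E; ring). nra.
Qed.

Lemma det_IZR (a b c d : Z) : (a * d - b * c = 1)%Z -> IZR a * IZR d - IZR b * IZR c = 1.
Proof. intro Hdet. rewrite <- !mult_IZR, <- minus_IZR, Hdet. reflexivity. Qed.

Lemma trace_sq_gt_4 (a b c d : Z) : (a * d - b * c = 1)%Z ->
  ~ has_unimodular_eigenvalue a b c d -> 4 < (IZR a + IZR d) * (IZR a + IZR d).
Proof.
  intros Hdet Hno. pose proof (det_IZR a b c d Hdet) as Hdet_R.
  set (t := IZR a + IZR d). destruct (Rlt_le_dec 4 (t * t)) as [Ht | Ht]; [exact Ht |].
  (* for |tr A| <= 2 the eigenvalues t/2 +- i sqrt(1 - t^2/4) lie on the unit circle *)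
  exfalso. apply Hno. exists (t / 2), (sqrt (1 - t * t / 4)).
  assert (Hv : sqrt (1 - t * t / 4) ^ 2 = 1 - t * t / 4)
    by (simpl; rewrite Rmult_1_r; apply sqrt_sqrt; lra).
  rewrite Hv. unfold t in *. repeat split; [field | nra | field].
Qed.

Section Hyperbolic_matrix.
Variables a b c d : Z.
Hypothesis Hdet : (a * d - b * c = 1)%Z.

Let A := gA a b c d.
Let Ai := gA_inv a b c d.
Let t := IZR a + IZR d.

Hypothesis Htrace : 4 < t * t.

Lemma gA_gA_inv p : A (Ai p) = p.
Proof.
  pose proof (det_IZR a b c d Hdet) as Hdet_R. destruct p as [p1 p2].
  unfold A, Ai, gA, gA_inv, lin; simpl. rewrite !opp_IZR.
  f_equal; [rewrite <- (Rmult_1_l p1) at 3 | rewrite <- (Rmult_1_l p2) at 3];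
    rewrite <- Hdet_R; ring.
Qed.

Lemma gA_inv_gA p : Ai (A p) = p.
Proof.
  pose proof (det_IZR a b c d Hdet) as Hdet_R. destruct p as [p1 p2].
  unfold A, Ai, gA, gA_inv, lin; simpl. rewrite !opp_IZR.
  f_equal; [rewrite <- (Rmult_1_l p1) at 3 | rewrite <- (Rmult_1_l p2) at 3];
    rewrite <- Hdet_R; ring.
Qed.

Lemma c_neq_0 : IZR c <> 0.
Proof.
  intro Hc. apply (eq_IZR c 0) in Hc.
  assert (Had : (a * d = 1)%Z) by (rewrite Hc in Hdet; lia).
  pose proof Htrace as Ht. unfold t in Ht.
  destruct (Z.eq_mul_1 a d Had) as [Ha | Ha];
    assert (Hd : d = a) by (rewrite Ha in Had |- *; lia); rewrite Hd, Ha in Ht; simpl in Ht; lra.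
Qed.

Section Lift.
Variable x : Z -> pt.

Fixpoint lift_forward (n : nat) : pt :=
  match n with
  | O => x 0%Z
  | S m => nearest_lift (A (lift_forward m)) (x (Z.of_nat (S m)))
  end.

Fixpoint lift_backward (n : nat) : pt :=
  match n with
  | O => x 0%Z
  | S m => Ai (nearest_lift (lift_backward m) (A (x (- Z.of_nat (S m))%Z)))
  end.

Definition lift_orbit (k : Z) : pt :=
  match k with
  | Z0 => x 0%Z
  | Zpos p => lift_forward (Pos.to_nat p)
  | Zneg p => lift_backward (Pos.to_nat p)
  end.

Lemma lift_orbit_of_nat n : lift_orbit (Z.of_nat n) = lift_forward n.
Proof. destruct n; [reflexivity |]. simpl. rewrite SuccNat2Pos.id_succ. reflexivity. Qed.

Lemma lift_orbit_opp_of_nat n : lift_orbit (- Z.of_nat n) = lift_backward n.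
Proof. destruct n; [reflexivity |]. simpl. rewrite SuccNat2Pos.id_succ. reflexivity. Qed.

Lemma lift_orbit_equiv k : sphere_equiv (lift_orbit k) (x k).
Proof.
  destruct (Z_of_nat_cases k) as [[[| n] ->] | [n ->]].
  - exists 0%Z, 0%Z. left. unfold translate. rewrite !Rplus_0_r. apply surjective_pairing.
  - rewrite lift_orbit_of_nat. apply nearest_lift_equiv.
  - rewrite lift_orbit_opp_of_nat. simpl. set (y := x _). rewrite <- (gA_inv_gA y) at 2.
    apply sphere_equiv_lin, nearest_lift_equiv.
Qed.

Lemma lift_orbit_close k :
  sup_dist (A (lift_orbit k)) (lift_orbit (k + 1)) <= dS (A (x k)) (x (k + 1)%Z).
Proof.
  destruct (Z_of_nat_cases k) as [[n ->] | [n ->]].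
  - replace (Z.of_nat n + 1)%Z with (Z.of_nat (S n)) by lia.
    rewrite !lift_orbit_of_nat. simpl. rewrite sup_dist_nearest_lift.
    rewrite <- lift_orbit_of_nat. right.
    apply dS_sphere_equiv_l, sphere_equiv_lin, lift_orbit_equiv.
  - replace (- Z.of_nat (S n) + 1)%Z with (- Z.of_nat n)%Z by lia.
    rewrite !lift_orbit_opp_of_nat. simpl. rewrite gA_gA_inv.
    rewrite sup_dist_sym, sup_dist_nearest_lift, dS_sym, <- lift_orbit_opp_of_nat. right.
    apply dS_sphere_equiv_r, lift_orbit_equiv.
Qed.

End Lift.

(* For a root [rho] of the characteristic polynomial, [(c, rho - a)] is a left
   eigenvector of [A]. *)
Definition eigen_coord (rho : R) (v : pt) : R := IZR c * fst v + (rho - IZR a) * snd v.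

Lemma eigen_coord_gA rho v : rho ^ 2 - t * rho + 1 = 0 ->
  eigen_coord rho (A v) = rho * eigen_coord rho v.
Proof.
  intro Hrho. pose proof (det_IZR a b c d Hdet) as Hdet_R.
  unfold eigen_coord, A, gA, lin, t in *; simpl.
  transitivity (rho * (IZR c * fst v + (rho - IZR a) * snd v)
                - snd v * (rho ^ 2 - (IZR a + IZR d) * rho + 1)
                + snd v * (1 - (IZR a * IZR d - IZR b * IZR c))); [ring |].
  rewrite Hrho, Hdet_R. ring.
Qed.

Lemma eigen_coord_lipschitz rho v w :
  Rabs (eigen_coord rho v - eigen_coord rho w)
  <= (Rabs (IZR c) + Rabs (rho - IZR a)) * sup_dist v w.
Proof.
  unfold eigen_coord, sup_dist.
  replace (IZR c * fst v + (rho - IZR a) * snd v - (IZR c * fst w + (rho - IZR a) * snd w))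
    with (IZR c * (fst v - fst w) + (rho - IZR a) * (snd v - snd w)) by ring.
  eapply Rle_trans; [apply Rabs_triang |]. rewrite !Rabs_mult, Rmult_plus_distr_r.
  apply Rplus_le_compat; apply Rmult_le_compat_l; try apply Rabs_pos;
    [apply Rmax_l | apply Rmax_r].
Qed.

Lemma eigen_coord_pseudo_orbit rho (x : Z -> pt) : rho ^ 2 - t * rho + 1 = 0 ->
  tz (fun k => dS (A (x k)) (x (k + 1)%Z)) ->
  tz (fun k => eigen_coord rho (lift_orbit x (k + 1)) - rho * eigen_coord rho (lift_orbit x k)).
Proof.
  intros Hrho Hx.
  apply tz_le with (fun k => (Rabs (IZR c) + Rabs (rho - IZR a)) * dS (A (x k)) (x (k + 1)%Z));
    [apply tz_scal, Hx |].
  intro k. rewrite <- eigen_coord_gA by exact Hrho. rewrite Rabs_minus_sym.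
  eapply Rle_trans; [apply eigen_coord_lipschitz |].
  apply Rmult_le_compat_l; [pose proof (Rabs_pos (IZR c)); pose proof (Rabs_pos (rho - IZR a)); lra |].
  apply lift_orbit_close.
Qed.

Lemma eigen_coord_orbit rho w : rho ^ 2 - t * rho + 1 = 0 ->
  geometric rho (fun k => eigen_coord rho (iterZ A Ai k w)).
Proof. intros Hrho k. rewrite iterZ_succ by exact gA_gA_inv. apply eigen_coord_gA, Hrho. Qed.

Lemma eigen_coords_surjective lam mu Cl Cm : lam <> mu ->
  exists w, eigen_coord lam w = Cl /\ eigen_coord mu w = Cm.
Proof.
  intro Hlm. pose proof c_neq_0 as Hc.
  set (w2 := (Cl - Cm) / (lam - mu)).
  exists ((Cl - (lam - IZR a) * w2) / IZR c, w2).
  unfold eigen_coord, w2; simpl. split; field; split; auto; lra.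
Qed.

Lemma eigen_coords_tz lam mu (v w : Z -> pt) : lam <> mu ->
  tz (fun k => eigen_coord lam (v k) - eigen_coord lam (w k)) ->
  tz (fun k => eigen_coord mu (v k) - eigen_coord mu (w k)) ->
  tz (fun k => sup_dist (v k) (w k)).
Proof.
  intros Hlm Hlam Hmu. pose proof c_neq_0 as Hc.
  assert (Hsnd : tz (fun k => snd (v k) - snd (w k))).
  { apply tz_ext with (fun k => / (lam - mu) * (eigen_coord lam (v k) - eigen_coord lam (w k))
                              + - / (lam - mu) * (eigen_coord mu (v k) - eigen_coord mu (w k))).
    - apply tz_plus; apply tz_scal; assumption.
    - intro k. unfold eigen_coord. field. lra. }
  assert (Hfst : tz (fun k => fst (v k) - fst (w k))).
  { apply tz_ext with (fun k => / IZR c * (eigen_coord lam (v k) - eigen_coord lam (w k))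
                              + - (lam - IZR a) / IZR c * (snd (v k) - snd (w k))).
    - apply tz_plus; apply tz_scal; assumption.
    - intro k. unfold eigen_coord. field. exact Hc. }
  apply tz_le with (fun k => Rabs (fst (v k) - fst (w k)) + Rabs (snd (v k) - snd (w k)));
    [apply tz_plus; apply tz_abs; assumption |].
  intro k. unfold sup_dist.
  pose proof (Rabs_pos (fst (v k) - fst (w k))). pose proof (Rabs_pos (snd (v k) - snd (w k))).
  rewrite Rabs_pos_eq by (eapply Rle_trans; [| apply Rmax_l]; assumption).
  apply Rmax_lub; lra.
Qed.

Lemma gA_two_sided_limit_shadowing : two_sided_limit_shadowing dS A Ai.
Proof.
  intros x Hx.
  destruct (quadratic_distinct_roots t Htrace) as (lam & mu & Hlm & Hlam & Hmu).
  set (z := lift_orbit x).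
  assert (Hshadow : forall rho, rho ^ 2 - t * rho + 1 = 0 ->
            exists q, geometric rho q /\ tz (fun k => q k - eigen_coord rho (z k))).
  { intros rho Hrho. destruct (quadratic_root_hyperbolic t rho Htrace Hrho).
    apply scalar_shadowing; try assumption. apply eigen_coord_pseudo_orbit; assumption. }
  destruct (Hshadow lam Hlam) as (ql & Hql & Tl).
  destruct (Hshadow mu Hmu) as (qm & Hqm & Tm).
  destruct (eigen_coords_surjective lam mu (ql 0%Z) (qm 0%Z) Hlm) as (w & Hwl & Hwm).
  exists w. set (W := fun k => iterZ A Ai k w).
  assert (Horbit : forall rho q, rho ^ 2 - t * rho + 1 = 0 -> geometric rho q ->
            eigen_coord rho w = q 0%Z -> forall k, eigen_coord rho (W k) = q k).
  { intros rho q Hrho Hq Hq0.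
    apply (geometric_unique rho (fun k => eigen_coord rho (W k)) q);
      [apply (quadratic_root_hyperbolic t rho Htrace Hrho)
      | apply eigen_coord_orbit, Hrho | exact Hq | exact Hq0]. }
  apply tz_le with (fun k => sup_dist (W k) (z k)).
  - apply (eigen_coords_tz lam mu); [exact Hlm | |].
    + apply tz_ext with (1 := Tl). intro k. rewrite (Horbit lam ql); auto.
    + apply tz_ext with (1 := Tm). intro k. rewrite (Horbit mu qm); auto.
  - intro k. rewrite Rabs_pos_eq by apply dS_nonneg.
    rewrite <- (dS_sphere_equiv_r _ _ _ (lift_orbit_equiv x k)). apply dS_le_sup_dist.
Qed.

End Hyperbolic_matrix.

Theorem mainTheorem16 (a b c d : Z) :
  (a * d - b * c = 1)%Z ->
  ~ has_unimodular_eigenvalue a b c d ->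
  two_sided_limit_shadowing dS (gA a b c d) (gA_inv a b c d).
Proof.
  intros Hdet Hhyp.
  exact (gA_two_sided_limit_shadowing a b c d Hdet (trace_sq_gt_4 a b c d Hdet Hhyp)).
Qed.
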